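(* Let $N\ge3$ be odd, $K=\tilde F(N)$, $L=N(N+1)$, $n=N$, and let $C^0,\dots,C^{K-1}$ be the sequences $c^m_i=\omega_{N+1}^{\pi_m(\langle i\rangle_N)\cdot i}$ ($0\le i<L$) built from a $K\times N$ circular Florentine rectangle with rows $\pi_0,\dots,\pi_{K-1}$. Let $\theta_c$ and $\theta_{\max}$ be as follows: $\theta_c=\max\{|\theta_{C^m,C^{m'}}(\tau)|:m\neq m',\ 0\le\tau<L\}$, $\theta_a=\max\{|\theta_{C^m}(\tau)|:0\le m<K,\ 0<\tau<L\}$, $\theta_{\max}=\max\{\theta_a,\theta_c\}$. Then $\theta_c=\frac{L}{\sqrt{L-n}}$ (i.e., equality holds in the bound $\theta_c\ge L/\sqrt{L-n}$). Moreover, setting $$\theta_{opti}=L\sqrt{\frac{(K-1)L+n}{(L-n)(KL-1)}},$$ if $N\to\infty$ through odd integers with $\tilde F(N)\to\infty$, then $\theta_{\max}/\theta_{opti}\to 1$.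
   Context: $\omega_n=e^{2\pi\sqrt{-1}/n}$; $\langle i\rangle_N$ is $i$ mod $N$. An $M\times N$ circular Florentine rectangle (CFR) over $\mathbb{Z}_N$ is an $M\times N$ array whose rows $\pi_i:\mathbb{Z}_N\to\mathbb{Z}_N$ are permutations such that for every $m\in\mathbb{Z}_N\setminus\{0\}$ and all $i,j,x,y$: $(\pi_i(x),\pi_i(x+m))=(\pi_j(y),\pi_j(y+m))$ (indices mod $N$) iff $i=j$ and $x=y$. $\tilde F(N)$ is the largest $M$ for which an $M\times N$ CFR exists. Periodic correlation: $\theta_{C,D}(\tau)=\sum_{t=0}^{L-1}c_td^*_{\langle t+\tau\rangle_L}$, $\theta_C=\theta_{C,C}$. These sequences have frequency-domain duals vanishing exactly on $\{1+a(N+1):a\in\mathbb{Z}_N\}$ (a set of $n=N$ carriers). *)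

From HB Require Import structures.
From mathcomp Require Import all_boot all_order all_algebra.
From mathcomp Require Import all_classical all_reals all_analysis.
From mathcomp Require Import complex.
From mathcomp Require Import fingroup perm.
Set Implicit Arguments. Unset Strict Implicit. Unset Printing Implicit Defensive.
Import Order.TTheory GRing.Theory Num.Theory.
Local Open Scope ring_scope.

Definition pnat (N : nat) (p : {perm 'I_N}) (k : nat) : nat :=
  if insub k is Some o then val (p o) else 0%N.

Definition is_CFR (M N : nat) (pi : 'I_M -> {perm 'I_N}) : Prop :=
  forall m : nat, (0 < m < N)%N ->
  forall (i j : 'I_M) (x y : nat), (x < N)%N -> (y < N)%N ->
    ((pnat (pi i) x, pnat (pi i) ((x + m) %% N)) =
     (pnat (pi j) y, pnat (pi j) ((y + m) %% N)))
    <-> (i = j /\ x = y).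

Definition is_Ftilde (K N : nat) : Prop :=
  (exists pi : 'I_K -> {perm 'I_N}, is_CFR pi) /\
  (forall (M : nat) (pi : 'I_M -> {perm 'I_N}), is_CFR pi -> (M <= K)%N).

Local Open Scope complex_scope.

Definition omega (R : realType) (n : nat) : R[i] :=
  (cos (2 * pi / n%:R)) +i* (sin (2 * pi / n%:R)).

Definition cseq (R : realType) (K N : nat) (pi : 'I_K -> {perm 'I_N})
  (m : 'I_K) (t : nat) : R[i] :=
  omega R N.+1 ^+ (pnat (pi m) (t %% N) * t).

Definition pcorr (R : realType) (L : nat) (c d : nat -> R[i]) (tau : nat) : R[i] :=
  \sum_(t < L) c t * (d ((t + tau) %% L)%N)^*.

Definition theta_c (R : realType) (K N : nat) (pi : 'I_K -> {perm 'I_N}) : R :=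
  let L := (N * N.+1)%N in
  \big[Num.max/0]_(m < K) \big[Num.max/0]_(m' < K | m != m')
    \big[Num.max/0]_(tau < L) ComplexField.Normc.normc (pcorr L (cseq R pi m) (cseq R pi m') tau).

Definition theta_a (R : realType) (K N : nat) (pi : 'I_K -> {perm 'I_N}) : R :=
  let L := (N * N.+1)%N in
  \big[Num.max/0]_(m < K)
    \big[Num.max/0]_(tau < L | (0 < tau)%N)
       ComplexField.Normc.normc (pcorr L (cseq R pi m) (cseq R pi m) tau).

Definition theta_max (R : realType) (K N : nat) (pi : 'I_K -> {perm 'I_N}) : R :=
  Num.max (theta_a R pi) (theta_c R pi).

Definition theta_opti (R : realType) (K N : nat) : R :=
  let L : R := (N * N.+1)%N%:R in
  let n : R := N%:R in
  L * Num.sqrt (((K%:R - 1) * L + n) / ((L - n) * (K%:R * L - 1))).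

Definition nat_to_infty (u : nat -> nat) : Prop :=
  forall B : nat, exists k0 : nat, forall k : nat, (k0 <= k)%N -> (B <= u k)%N.

(* Reduce t modulo N and modulo N+1 separately (Chinese remainder theorem): the
   term c^m_t (c^m'_(t+tau))^* depends on t mod N through the permutations and on
   t mod N+1 only through a power of omega_(N+1).  Summing over t mod N+1 first
   kills every a in Z_N except the coincidences pi_m(a) = pi_m'(a + tau), each of
   which contributes N+1 times a root of unity.  For m <> m' the circular
   Florentine property allows at most one coincidence, and tau = pi_m'^-1(pi_m(0))
   produces one, so theta_c = N+1 = L / sqrt(L - n) as soon as K >= 2, which holds
   for odd N because of the two rows x |-> x and x |-> 2x.  For m = m' there are
   coincidences only when N divides tau, and then the sum is a full geometric sum
   of an (N+1)-th root of unity minus one term, so theta_a = theta_max = N+1.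
   Finally (N+1) / theta_opti lies between 1 and 1 + 1/(K-1). *)

From Pilot Require Import Defs.
From HB Require Import structures.
From mathcomp Require Import all_boot all_order all_algebra.
From mathcomp Require Import all_classical all_reals all_analysis.
From mathcomp Require Import complex.
From mathcomp Require Import fingroup perm.
From mathcomp Require Import ring lra zify.

Set Implicit Arguments.
Unset Strict Implicit.
Unset Printing Implicit Defensive.

Import Order.TTheory GRing.Theory Num.Theory.
Import numFieldNormedType.Exports.
Local Open Scope classical_set_scope.
Local Open Scope ring_scope.

Local Notation normc := ComplexField.Normc.normc.

Section RootsOfUnity.
Variable R : realType.
Local Open Scope complex_scope.

Lemma omega_expE (n k : nat) :
  omega R n ^+ k = cos (k%:R * (2 * pi / n%:R)) +i* sin (k%:R * (2 * pi / n%:R)).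
Proof.
elim: k => [|k IHk]; first by rewrite expr0 mul0r cos0 sin0.
rewrite exprS IHk /omega; set t := 2 * pi / n%:R.
rewrite -addn1 natrD mulrDl mul1r addrC cosD sinD.
by simpc; congr (_ +i* _); ring.
Qed.

Lemma omega_exp_order (n : nat) : (0 < n)%N -> omega R n ^+ n = 1.
Proof.
move=> n_gt0; rewrite omega_expE mulrC divfK ?pnatr_eq0 -?lt0n //.
by rewrite -[2]/(2%:R) mulr_natl cos2pi sin2pi.
Qed.

Lemma cos_neq1 (x : R) : 0 < x < pi *+ 2 -> cos x != 1.
Proof.
move=> /andP[x_gt0 x_lt2pi]; have pi_gt0 := pi_gt0 R.
have cos_lt1 (y : R) : 0 < y <= pi -> cos y != 1.
  move=> /andP[y_gt0 y_lepi]; rewrite -cos0; apply/eqP => /cos_inj.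
  rewrite !in_itv /= lexx (ltW pi_gt0) (ltW y_gt0) y_lepi => /(_ isT isT) y0.
  by move: y_gt0; rewrite y0 ltxx.
have [x_lepi|x_gtpi] := lerP x pi; first by rewrite cos_lt1 ?x_gt0.
have -> : cos x = cos (pi *+ 2 - x) by rewrite cosB cos2pi sin2pi mul1r mul0r addr0.
by apply: cos_lt1; apply/andP; split; lra.
Qed.

Lemma omega_exp_neq1 (n k : nat) : (0 < k < n)%N -> omega R n ^+ k != 1.
Proof.
move=> /andP[k_gt0 k_ltn]; rewrite omega_expE; apply/negP => /eqP[+ _].
apply/eqP/cos_neq1.
have n_gt0 : 0 < n%:R :> R by rewrite ltr0n (leq_ltn_trans _ k_ltn).
have kR_gt0 : 0 < k%:R :> R by rewrite ltr0n.
have kR_ltn : k%:R < n%:R :> R by rewrite ltr_nat.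
have pi_gt0 := pi_gt0 R.
rewrite mulrA mulr_gt0 ?divr_gt0 ?mulr_gt0 ?invr_gt0 //=.
rewrite mulrA ltr_pdivrMr // -[2]/(2%:R) mulr_natr mulrnAl !mulr2n; nra.
Qed.

Lemma normc_omega_exp (n k : nat) : normc (omega R n ^+ k) = 1.
Proof. by rewrite omega_expE /ComplexField.Normc.normc cos2Dsin2 sqrtr1. Qed.

Lemma normc_natrM_omega_exp (j n k : nat) : normc (j%:R * omega R n ^+ k) = j%:R.
Proof.
by rewrite ComplexField.Normc.normcM normc_omega_exp mulr1 normcMn
  ComplexField.Normc.normc1.
Qed.

Lemma omega_exp_eqmod (n a b : nat) : (0 < n)%N -> a = b %[mod n] ->
  omega R n ^+ a = omega R n ^+ b.
Proof.
move=> n_gt0 eq_ab.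
suff exp_mod c : omega R n ^+ c = omega R n ^+ (c %% n) by rewrite exp_mod eq_ab -exp_mod.
by rewrite {1}(divn_eq c n) exprD mulnC exprM omega_exp_order // expr1n mul1r.
Qed.

Lemma conjc_omega_exp (n k : nat) : (0 < n)%N ->
  conjc (omega R n ^+ k) = omega R n ^+ (n.-1 * k).
Proof.
move=> n_gt0; rewrite rmorphXn exprM; congr (_ ^+ k).
have omega_inv : omega R n ^+ n.-1 * omega R n = 1.
  by rewrite -exprSr prednK // omega_exp_order.
have omega_neq0 : omega R n != 0.
  by apply: contra_eq_neq omega_inv => ->; rewrite mulr0 eq_sym oner_neq0.
apply: (mulIf omega_neq0); rewrite omega_inv /omega; simpc.
by rewrite -!expr2 cos2Dsin2; congr (_ +i* _); ring.
Qed.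

End RootsOfUnity.

Lemma sum_root_of_unity_eq0 (F : fieldType) (x : F) (n : nat) :
  x ^+ n = 1 -> x != 1 -> \sum_(i < n) x ^+ i = 0.
Proof.
move=> xn1 x_neq1; apply/eqP; move: (subrX1 x n).
by rewrite xn1 subrr => /esym/eqP; rewrite mulf_eq0 subr_eq0 (negbTE x_neq1).
Qed.

Lemma sum_chinese (V : nmodType) (N e : nat) (G : nat -> nat -> V) :
  (0 < N)%N -> (0 < e)%N -> coprime N e ->
  \sum_(t < N * e) G (t %% N)%N (t %% e)%N = \sum_(a < N) \sum_(b < e) G a b.
Proof.
move=> N_gt0 e_gt0 co_Ne; have Ne_gt0 : (0 < N * e)%N by rewrite muln_gt0 N_gt0.
pose rem (t : 'I_(N * e)) : 'I_N * 'I_e :=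
  (Ordinal (ltn_pmod t N_gt0), Ordinal (ltn_pmod t e_gt0)).
pose crt (p : 'I_N * 'I_e) : 'I_(N * e) :=
  Ordinal (ltn_pmod (chinese N e p.1 p.2) Ne_gt0).
have remK : cancel rem crt.
  by move=> t; apply: val_inj; rewrite /= -chinese_mod // modn_small.
have crtK : cancel crt rem.
  move=> [a b]; congr (_, _); apply: val_inj => /=.
    by rewrite modn_dvdm ?dvdn_mulr // chinese_modl // modn_small.
  by rewrite modn_dvdm ?dvdn_mull // chinese_modr // modn_small.
by rewrite pair_bigA (reindex rem) //; exists crt.
Qed.

Lemma mod_succ_add_mul_eq0 (N P Q : nat) : (P <= N)%N -> (Q <= N)%N ->
  (P + N * Q == 0 %[mod N.+1])%N = (P == Q).
Proof.
move=> P_leN Q_leN; rewrite -(eqn_modDr Q) add0n.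
have -> : (P + N * Q + Q = Q * N.+1 + P)%N by ring.
by rewrite modnMDl !modn_small.
Qed.

Lemma sum_omega_exp (R : realType) (N P Q : nat) : (P <= N)%N -> (Q <= N)%N ->
  \sum_(b < N.+1) (omega R N.+1 ^+ (P + N * Q)) ^+ b = if P == Q then N.+1%:R else 0.
Proof.
move=> P_leN Q_leN; have [->|P_neqQ] := eqVneq P Q.
  have -> : omega R N.+1 ^+ (Q + N * Q) = 1.
    by rewrite -mulSn exprM omega_exp_order // expr1n.
  by under eq_bigr do rewrite expr1n; rewrite sumr_const card_ord.
apply: sum_root_of_unity_eq0.
  by rewrite -exprM mulnC exprM omega_exp_order // expr1n.
rewrite (@omega_exp_eqmod _ _ _ ((P + N * Q) %% N.+1)) ?modn_mod //.
by rewrite omega_exp_neq1 // ltn_pmod // andbT lt0n mod_succ_add_mul_eq0.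
Qed.

Lemma pnat_ord (N : nat) (p : {perm 'I_N}) (a : 'I_N) : Defs.pnat p a = p a.
Proof. by rewrite /Defs.pnat valK. Qed.

Lemma pnat_ordinal (N : nat) (p : {perm 'I_N}) (k : nat) (k_ltN : (k < N)%N) :
  Defs.pnat p k = p (Ordinal k_ltN).
Proof. exact (pnat_ord p (Ordinal k_ltN)). Qed.

Lemma pnat_lt (N : nat) (p : {perm 'I_N}) (k : nat) :
  (0 < N)%N -> (Defs.pnat p k < N)%N.
Proof.
by move=> N_gt0; rewrite /Defs.pnat; case: insubP => [u _ _|_]; first exact: ltn_ord.
Qed.

Definition coincident (N : nat) (p q : {perm 'I_N}) (tau : nat) (a : 'I_N) : bool :=
  Defs.pnat p a == Defs.pnat q ((a + tau) %% N).

Lemma coincident_same (N : nat) (p : {perm 'I_N}) (tau : nat) (a : 'I_N) :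
  coincident p p tau a = (tau %% N == 0)%N.
Proof.
have N_gt0 : (0 < N)%N by apply: leq_ltn_trans (ltn_ord a).
rewrite /coincident pnat_ord (pnat_ordinal _ (ltn_pmod (a + tau) N_gt0)).
rewrite (inj_eq val_inj) (inj_eq perm_inj) -(inj_eq val_inj) /=.
rewrite -{1}[val a](@modn_small _ N) ?ltn_ord // -{1}[val a]addn0.
by rewrite eqn_modDl mod0n eq_sym.
Qed.

Lemma CFR_coincident_uniq (K N : nat) (pi : 'I_K -> {perm 'I_N}) (m m' : 'I_K)
    (tau : nat) (a1 a2 : 'I_N) :
  is_CFR pi -> m != m' ->
  coincident (pi m) (pi m') tau a1 -> coincident (pi m) (pi m') tau a2 -> a1 = a2.
Proof.
move=> CFR_pi neq_mm'.
wlog a12 : a1 a2 / (a1 < a2)%N.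
  move=> W co1 co2; case: (ltngtP a1 a2) => [a12|a21|/val_inj //].
    exact: W co1 co2.
  exact/esym/W.
move=> /eqP co1 /eqP co2.
have N_gt0 : (0 < N)%N by apply: leq_ltn_trans (ltn_ord a1).
have d_range : (0 < a2 - a1 < N)%N by have := ltn_ord a2; lia.
have := (CFR_pi _ d_range m m' _ _ (ltn_ord a1) (ltn_pmod (a1 + tau) N_gt0)).1.
rewrite (subnKC (ltnW a12)) (modn_small (ltn_ord a2)).
rewrite modnDml addnAC (subnKC (ltnW a12)) -co1 -co2 => /(_ erefl)[eq_mm' _].
by rewrite eq_mm' eqxx in neq_mm'.
Qed.

Section Correlations.
Variables (R : realType) (K N : nat) (pi : 'I_K -> {perm 'I_N}).
Hypothesis N_gt0 : (0 < N)%N.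
Local Notation L := (N * N.+1)%N.
Local Notation w := (omega R N.+1).
Local Notation theta m m' tau := (normc (pcorr L (cseq R pi m) (cseq R pi m') tau)).

Lemma pcorr_cseqE (m m' : 'I_K) (tau : nat) :
  pcorr L (cseq R pi m) (cseq R pi m') tau =
  N.+1%:R * \sum_(a < N | coincident (pi m) (pi m') tau a)
    w ^+ (N * (Defs.pnat (pi m') ((a + tau) %% N) * tau)).
Proof.
pose P a := Defs.pnat (pi m) a.
pose Q a := Defs.pnat (pi m') ((a + tau) %% N).
pose G a b := (w ^+ b) ^+ P a * ((w ^+ (b + tau)) ^+ Q a) ^+ N.
have pcorr_crt : pcorr L (cseq R pi m) (cseq R pi m') tau =
    \sum_(t < L) G (t %% N)%N (t %% N.+1)%N.
  apply: eq_bigr => t _; rewrite /cseq /G /P /Q [Num.conj _]conjc_omega_exp //=.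
  rewrite modn_dvdm ?dvdn_mulr // modnDml; congr (_ * _).
    by rewrite mulnC exprM (omega_exp_eqmod _ _ (esym (modn_mod t N.+1))).
  rewrite mulnC exprM mulnC exprM; congr (_ ^+ _ ^+ _); apply: omega_exp_eqmod => //.
  by rewrite modn_dvdm ?dvdn_mull // modnDml.
rewrite pcorr_crt sum_chinese ?coprimenS // big_distrr /= [RHS]big_mkcond /=.
apply: eq_bigr => a _.
have G_geom b : G a b = w ^+ (N * (Q a * tau)) * (w ^+ (P a + N * Q a)) ^+ b.
  by rewrite /G -!exprM -!exprD; congr (w ^+ _); ring.
under eq_bigr => b _ do rewrite G_geom.
rewrite -big_distrr /= sum_omega_exp ?(ltnW (pnat_lt _ _ N_gt0)) //.
rewrite /coincident -/(P a) -/(Q a); case: (P a == Q a); last by rewrite mulr0.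
by rewrite mulrC.
Qed.

Lemma normc_pcorr_single (m m' : 'I_K) (tau : nat) (a0 : 'I_N) :
  coincident (pi m) (pi m') tau =1 pred1 a0 -> theta m m' tau = N.+1%:R.
Proof.
by move=> co_a0; rewrite pcorr_cseqE // (big_pred1 a0) // normc_natrM_omega_exp.
Qed.

Lemma normc_pcorr_none (m m' : 'I_K) (tau : nat) :
  coincident (pi m) (pi m') tau =1 xpred0 -> theta m m' tau = 0.
Proof.
by move=> no_co; rewrite pcorr_cseqE // big_pred0 // mulr0 ComplexField.Normc.normc0.
Qed.

Lemma normc_pcorr_auto_period (m : 'I_K) (tau : nat) :
  (tau %% N = 0)%N -> ~~ (N.+1 %| tau)%N -> theta m m tau = N.+1%:R.
Proof.
move=> tau_modN tau_ndvd; set y := w ^+ (N * tau).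
have shift_a (a : 'I_N) : ((a + tau) %% N)%N = a.
  by rewrite -modnDmr tau_modN addn0 modn_small.
(* every a is a coincidence, and pi m only permutes the exponents *)
have sum_perm : \sum_(a < N | coincident (pi m) (pi m) tau a)
    w ^+ (N * (Defs.pnat (pi m) ((a + tau) %% N) * tau)) = \sum_(b < N) y ^+ b.
  under eq_bigl => a do rewrite coincident_same tau_modN eqxx.
  rewrite [RHS](reindex_inj (@perm_inj _ (pi m))); apply: eq_bigr => a _.
  by rewrite shift_a pnat_ord -exprM; congr (_ ^+ _); ring.
have y_order : y ^+ N.+1 = 1 by rewrite -exprM mulnC exprM omega_exp_order // expr1n.
have y_neq1 : y != 1.
  rewrite /y (@omega_exp_eqmod _ _ _ ((N * tau) %% N.+1)) ?modn_mod //.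
  rewrite omega_exp_neq1 // ltn_pmod // andbT lt0n; apply: contraNneq tau_ndvd.
  by move/eqP; rewrite -/(dvdn _ _) Gauss_dvdr // coprime_sym coprimenS.
have := sum_root_of_unity_eq0 y_order y_neq1; rewrite big_ord_recr /= => /eqP.
rewrite addr_eq0 => /eqP sum_y.
by rewrite pcorr_cseqE // sum_perm sum_y mulrN normcN /y -exprM normc_natrM_omega_exp.
Qed.

Lemma normc_pcorr_auto_off (m : 'I_K) (tau : nat) :
  (tau %% N != 0)%N -> theta m m tau = 0.
Proof.
move=> tau_modN; rewrite pcorr_cseqE // big_pred0 ?mulr0 ?ComplexField.Normc.normc0 //.
by move=> a; rewrite coincident_same (negbTE tau_modN).
Qed.

Lemma normc_pcorr_auto_le (m : 'I_K) (tau : nat) :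
  (0 < tau < L)%N -> theta m m tau <= N.+1%:R.
Proof.
move=> /andP[tau_gt0 tau_ltL]; have [tau_modN|tau_modN] := eqVneq (tau %% N)%N 0%N.
  rewrite normc_pcorr_auto_period //; apply: contraTN tau_ltL => dvd_tau.
  have : (L %| tau)%N by rewrite Gauss_dvd ?coprimenS // dvd_tau andbT /dvdn tau_modN.
  by move/(dvdn_leq tau_gt0); rewrite -leqNgt.
by rewrite normc_pcorr_auto_off.
Qed.

Lemma normc_pcorr_auto_N (m : 'I_K) : theta m m N = N.+1%:R.
Proof. by rewrite normc_pcorr_auto_period ?modnn // /dvdn modn_small // -lt0n. Qed.

Hypothesis CFR_pi : is_CFR pi.

Lemma normc_pcorr_cross_le (m m' : 'I_K) (tau : nat) :
  m != m' -> theta m m' tau <= N.+1%:R.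
Proof.
move=> neq_mm'; case: (pickP (coincident (pi m) (pi m') tau)) => [a0 co_a0|no_co].
  rewrite (@normc_pcorr_single _ _ _ a0) // => a; apply/idP/eqP => [co_a|->//].
  exact: CFR_coincident_uniq co_a co_a0.
by rewrite normc_pcorr_none.
Qed.

Lemma normc_pcorr_cross_max (m m' : 'I_K) :
  m != m' -> exists2 tau, (tau < L)%N & theta m m' tau = N.+1%:R.
Proof.
move=> neq_mm'; pose a0 : 'I_N := Ordinal N_gt0.
pose tau := ((pi m')^-1)%g (pi m a0).
have co_a0 : coincident (pi m) (pi m') tau a0.
  by rewrite /coincident add0n modn_small // !pnat_ord permKV.
exists (val tau); first by rewrite (leq_trans (ltn_ord tau)) // leq_pmulr.
apply: (@normc_pcorr_single _ _ _ a0) => a; apply/idP/eqP => [co_a|->//].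
exact: CFR_coincident_uniq co_a co_a0.
Qed.

End Correlations.

Section ThetaValues.
Variables (R : realType) (K N : nat) (pi : 'I_K -> {perm 'I_N}).
Local Notation L := (N * N.+1)%N.

Lemma le_theta_c (m m' : 'I_K) (tau : 'I_L) : m != m' ->
  normc (pcorr L (cseq R pi m) (cseq R pi m') tau) <= theta_c R pi.
Proof.
move=> neq_mm'; rewrite /theta_c /=; apply: (le_trans _ (le_bigmax _ _ m)).
apply: (le_trans _ (le_bigmax_cond (P := fun j : 'I_K => m != j) _ _ neq_mm')).
exact: le_bigmax.
Qed.

Lemma le_theta_a (m : 'I_K) (tau : 'I_L) : (0 < tau)%N ->
  normc (pcorr L (cseq R pi m) (cseq R pi m) tau) <= theta_a R pi.
Proof.
move=> tau_gt0; rewrite /theta_a /=; apply: (le_trans _ (le_bigmax _ _ m)).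
exact: le_bigmax_cond tau_gt0.
Qed.

Hypotheses (N_gt0 : (0 < N)%N) (CFR_pi : is_CFR pi).

Lemma theta_c_le : theta_c R pi <= N.+1%:R.
Proof.
apply: bigmax_le => // m _; apply: bigmax_le => // m' neq_mm'.
apply: bigmax_le => // tau _; exact: normc_pcorr_cross_le.
Qed.

Lemma theta_c_eq : (1 < K)%N -> theta_c R pi = N.+1%:R.
Proof.
move=> K_gt1; apply/le_anti; rewrite theta_c_le /=.
have neq01 : Ordinal (ltnW K_gt1) != Ordinal K_gt1 by [].
have [tau tau_ltL <-] := normc_pcorr_cross_max R N_gt0 CFR_pi neq01.
exact: (le_theta_c (Ordinal tau_ltL) neq01).
Qed.

Lemma theta_a_eq : (0 < K)%N -> theta_a R pi = N.+1%:R.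
Proof.
move=> K_gt0; apply/le_anti/andP; split.
  apply: bigmax_le => // m _; apply: bigmax_le => // tau tau_gt0.
  by apply: normc_pcorr_auto_le; rewrite // tau_gt0 ltn_ord.
have N_ltL : (N < L)%N by rewrite -[X in (X < _)%N]muln1 ltn_pmul2l.
rewrite -(normc_pcorr_auto_N R pi N_gt0 (Ordinal K_gt0)).
exact: (le_theta_a _ (tau := Ordinal N_ltL) N_gt0).
Qed.

Lemma theta_max_eq : (0 < K)%N -> theta_max R pi = N.+1%:R.
Proof. by move=> K_gt0; rewrite /theta_max theta_a_eq //; apply/max_idPl/theta_c_le. Qed.

End ThetaValues.

Lemma modn_mul_coprime_inj (N a x y : nat) :
  coprime a N -> (x < N)%N -> (y < N)%N -> (a * x = a * y %[mod N])%N -> x = y.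
Proof.
move=> co_aN x_lt y_lt; wlog x_le_y : x y x_lt y_lt / (x <= y)%N.
  move=> W eq_xy; case: (leqP x y) => [x_le_y|/ltnW y_le_x].
    exact: W x_lt y_lt x_le_y eq_xy.
  exact/esym/(W _ _ y_lt x_lt y_le_x (esym eq_xy)).
move/esym/eqP; rewrite eqn_mod_dvd ?leq_mul2l ?x_le_y ?orbT // -mulnBr.
rewrite Gauss_dvdr 1?coprime_sym // => /dvdn_leq; lia.
Qed.

Section DoublingRectangle.
Variable N : nat.
Hypothesis N_odd : odd N.

Definition mul_ord (a : nat) (x : 'I_N) : 'I_N :=
  Ordinal (ltn_pmod (a * x) (odd_gt0 N_odd)).

Lemma mul_ord_inj (a : nat) : coprime a N -> injective (mul_ord a).
Proof.
move=> co_aN x y /(congr1 val) /= eq_xy; apply: val_inj.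
exact: modn_mul_coprime_inj co_aN (ltn_ord x) (ltn_ord y) eq_xy.
Qed.

Lemma coprime_succ_ord2 (i : 'I_2) : coprime i.+1 N.
Proof. by case: i => [[|[|//]] ?]; rewrite ?coprime1n ?coprime2n. Qed.

Definition doubling_rows (i : 'I_2) : {perm 'I_N} :=
  perm (mul_ord_inj (coprime_succ_ord2 i)).

Lemma pnat_doubling_rows (i : 'I_2) (k : nat) : (k < N)%N ->
  Defs.pnat (doubling_rows i) k = (i.+1 * k %% N)%N.
Proof. by move=> k_ltN; rewrite (pnat_ordinal _ k_ltN) permE. Qed.

Lemma doubling_rows_CFR : is_CFR doubling_rows.
Proof.
move=> m /andP[m_gt0 m_ltN] i j x y x_lt y_lt; split; last by case=> -> ->.
rewrite !pnat_doubling_rows ?ltn_pmod ?odd_gt0 // => -[eq_x].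
move/eqP; rewrite !modnMmr !mulnDr -modnDm eq_x modnDm eqn_modDl => /eqP eq_m.
have m_neq_2m : (1 * m != 2 * m %[mod N])%N.
  by rewrite mul1n mul2n -addnn -{1}[m]addn0 eqn_modDl mod0n modn_small // eq_sym -lt0n.
have eq_ij : i = j.
  apply: val_inj; case: i j eq_x eq_m => [[|[|//]] ?] [[|[|//]] ?] //= _ eq_m.
  - by rewrite eq_m eqxx in m_neq_2m.
  - by rewrite -eq_m eqxx in m_neq_2m.
split=> //; apply: modn_mul_coprime_inj (coprime_succ_ord2 i) x_lt y_lt _.
by rewrite eq_x eq_ij.
Qed.

End DoublingRectangle.

Lemma Ftilde_odd_gt1 (K N : nat) : odd N -> is_Ftilde K N -> (1 < K)%N.
Proof. by move=> N_odd [_ maxK]; exact: maxK _ (doubling_rows_CFR N_odd). Qed.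

Lemma natr_mul_succ_sub (R : pzRingType) (N : nat) :
  (N * N.+1)%N%:R - N%:R = N%:R ^+ 2 :> R.
Proof. by rewrite mulnS natrD addrC addKr natrM expr2. Qed.

Lemma mul_succ_div_sqrt (R : rcfType) (N : nat) : (0 < N)%N ->
  (N * N.+1)%N%:R / Num.sqrt ((N * N.+1)%N%:R - N%:R) = N.+1%:R :> R.
Proof.
move=> N_gt0; rewrite natr_mul_succ_sub sqrtr_sqr ger0_norm // natrM mulrAC.
by rewrite divff ?mul1r // pnatr_eq0 -lt0n.
Qed.

Lemma theta_optiE (R : realType) (K N : nat) : (0 < N)%N ->
  theta_opti R K N = N.+1%:R * Num.sqrt
    (((K%:R - 1) * (N * N.+1)%N%:R + N%:R) / (K%:R * (N * N.+1)%N%:R - 1)).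
Proof.
move=> N_gt0; rewrite /theta_opti; set x := (_ / (_ - 1)).
have n_neq0 : N%:R != 0 :> R by rewrite pnatr_eq0 -lt0n.
rewrite natr_mul_succ_sub.
have -> : ((K%:R - 1) * (N * N.+1)%N%:R + N%:R) /
    (N%:R ^+ 2 * (K%:R * (N * N.+1)%N%:R - 1)) = N%:R^-1 ^+ 2 * x.
  by rewrite /x invfM -exprVn mulrCA.
rewrite sqrtrM ?exprn_ge0 ?invr_ge0 // sqrtr_sqr ger0_norm ?invr_ge0 // natrM.
by field.
Qed.

Lemma opti_ratio_bounds (R : realFieldType) (k l n : R) :
  2 <= k -> 0 <= n -> n + 1 <= l -> (k - 1) / k <= ((k - 1) * l + n) / (k * l - 1) <= 1.
Proof.
move=> k_ge2 n_ge0 l_ge.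
have E_gt0 : 0 < k * l - 1.
  have : 0 <= (k - 2) * (l - 1) by apply: mulr_ge0; lra.
  nra.
have k_gt0 : 0 < k by lra.
apply/andP; split.
  rewrite ler_pdivlMr // mulrAC ler_pdivrMr //.
  have : 0 <= n * k by apply: mulr_ge0; lra.
  nra.
rewrite ler_pdivrMr // mul1r; nra.
Qed.

Lemma inv_sqrt_bounds (R : rcfType) (k x : R) :
  2 <= k -> (k - 1) / k <= x <= 1 -> 1 <= (Num.sqrt x)^-1 <= 1 + (k - 1)^-1.
Proof.
move=> k_ge2 /andP[x_ge x_le1].
have x_gt0 : 0 < x by apply: lt_le_trans x_ge; rewrite divr_gt0 //; lra.
have s_gt0 : 0 < Num.sqrt x by rewrite sqrtr_gt0.
have s_le1 : Num.sqrt x <= 1 by rewrite -sqrtr1 ler_sqrt.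
have x_le_s : x <= Num.sqrt x by rewrite -{1}(sqr_sqrtr (ltW x_gt0)) expr2; nra.
rewrite invf_ge1 // s_le1 /=.
have -> : 1 + (k - 1)^-1 = ((k - 1) / k)^-1 by field; lra.
rewrite lef_pV2 ?posrE ?divr_gt0 1?(le_trans x_ge x_le_s) //; lra.
Qed.

Lemma theta_opti_ratio (R : realType) (K N : nat) : (2 <= K)%N -> (0 < N)%N ->
  1 <= N.+1%:R / theta_opti R K N <= 1 + (K%:R - 1)^-1.
Proof.
move=> K_ge2 N_gt0; rewrite theta_optiE // invfM mulrA mulfV ?mul1r ?pnatr_eq0 //.
apply: inv_sqrt_bounds; first by rewrite ler_nat.
apply: opti_ratio_bounds; rewrite ?ler_nat ?ler0n //.
by rewrite natr1 ler_nat leq_pmull.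
Qed.

Lemma nat_to_infty_inv_cvg0 (R : realType) (u : nat -> nat) :
  nat_to_infty u -> ((u k)%:R - 1)^-1 @[k --> \oo] --> (0 : R).
Proof.
move=> u_infty; apply/cvgrPdist_le => eps eps_gt0.
have [k0 u_ge] := u_infty (Num.truncn eps^-1).+2.
exists k0 => // k /= k0_le; rewrite sub0r normrN.
have eps_lt : eps^-1 < (u k)%:R - 1.
  apply: lt_le_trans (truncnS_gt eps^-1) _.
  by rewrite lerBrDr natr1 ler_nat u_ge.
have u_gt0 : 0 < (u k)%:R - 1 :> R by apply: le_lt_trans eps_lt; rewrite invr_ge0 ltW.
rewrite ger0_norm ?invr_ge0 ?(ltW u_gt0) // -(invrK eps).
by rewrite lef_pV2 ?posrE ?invr_gt0 // ltW.
Qed.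

Theorem theorem4 (R : realType) :
  (forall (N K : nat) (pi : 'I_K -> {perm 'I_N}),
      odd N -> (3 <= N)%N -> is_Ftilde K N -> is_CFR pi ->
      theta_c R pi =
        (N * N.+1)%N%:R / Num.sqrt ((N * N.+1)%N%:R - N%:R)) /\
  (forall (Ns Ks : nat -> nat) (pis : forall k, 'I_(Ks k) -> {perm 'I_(Ns k)}),
      (forall k, odd (Ns k) /\ (3 <= Ns k)%N) ->
      (forall k, is_Ftilde (Ks k) (Ns k)) ->
      (forall k, is_CFR (pis k)) ->
      nat_to_infty Ns -> nat_to_infty Ks ->
      (fun k => theta_max R (pis k) / theta_opti R (Ks k) (Ns k)) @ \oo --> (1 : R)).
Proof.
split=> [N K pi N_odd _ Ftilde_K CFR_pi | Ns Ks pis Ns_odd Ftilde_Ks CFR_pis _ Ks_infty].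
  have N_gt0 := odd_gt0 N_odd.
  by rewrite mul_succ_div_sqrt // theta_c_eq ?(Ftilde_odd_gt1 N_odd Ftilde_K).
have ratio_bounds k : 1 <= theta_max R (pis k) / theta_opti R (Ks k) (Ns k)
                        <= 1 + ((Ks k)%:R - 1)^-1.
  have N_gt0 := odd_gt0 (Ns_odd k).1.
  have K_gt1 := Ftilde_odd_gt1 (Ns_odd k).1 (Ftilde_Ks k).
  by rewrite theta_max_eq ?(ltnW K_gt1) // theta_opti_ratio.
apply: (squeeze_cvgr (f := fun=> 1) (h := fun k => 1 + ((Ks k)%:R - 1)^-1)).
- exact: nearW ratio_bounds.
- exact: cvg_cst.
- rewrite -[X in _ --> X]addr0; apply: cvgD; first exact: cvg_cst.
  exact: nat_to_infty_inv_cvg0.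
Qed.
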